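(* Let $K\in\{\mathbb R,\mathbb C,\mathbb H\}$ and let $(E,d)$ be a metric vector space over $K$ such that $d$ is $C_0$-translation invariant and $(C_1,C_2,C_3)$-lipschitz multiplicative. Define $d_0(x,y)=\int_{\mathbb U}d(ux,uy)\,d\mu(u)$. Then $d_0$ is a distance on $E$ which is $(C_1,C_2+C_3)$-lipschitz equivalent to $d$, is $C_0$-translation invariant and is $(C_1,C_2,C_3)$-lipschitz multiplicative. Moreover $d$ and $d_0$ define the same topology on $E$.
   Context: $K$ has its usual absolute value. A metric vector space is a topological vector space over $K$ whose topology is generated by the metric $d$. $\mathbb U=\{u\in K:|u|=1\}$, $\mu$ the right-invariant Haar probability measure on $\mathbb U$. $d$ is $C_0$-translation invariant if $d(x+z,y+z)\le d(x,y)+C_0$ for all $x,y,z$. For $C_1\ge1$, $C_2,C_3\ge0$, $d$ is $(C_1,C_2,C_3)$-lipschitz multiplicative if $C_1^{-1}|\lambda|d(x,y)-C_2|\lambda|-C_3\le d(\lambda x,\lambda y)\le C_1|\lambda|d(x,y)+C_2|\lambda|+C_3$ for all $\lambda\in K$, $x,y\in E$. A distance $\rho$ is $(A,B)$-lipschitz equivalent to $\sigma$ if $A^{-1}\sigma(x,y)-B\le\rho(x,y)\le A\sigma(x,y)+B$ for all $x,y$. *)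

From mathcomp Require Import all_boot all_algebra all_classical all_reals all_analysis.
Import GRing.Theory Num.Theory.
Set Implicit Arguments. Unset Strict Implicit. Unset Printing Implicit Defensive.
Local Open Scope ring_scope.
Local Open Scope classical_set_scope.

(* Scalars: the three fields K in {R, C, H} are realised uniformly inside the
   quaternions  H = R^4,  q = ((a, b), (c, e)) = a + b i + c j + e k,
   carrying the product (Borel) sigma-algebra of R^4.
   R  = {((a,0),(0,0))},  C = {((a,b),(0,0))},  H = everything. *)
Notation quat R := ((R * R) * (R * R))%type.

Inductive Kind := Kreal | Kcomplex | Kquat.

Section Quat.
Variable R : realType.

Definition qadd (p q : quat R) : quat R :=
  ((p.1.1 + q.1.1, p.1.2 + q.1.2), (p.2.1 + q.2.1, p.2.2 + q.2.2)).
Definition qopp (p : quat R) : quat R :=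
  ((- p.1.1, - p.1.2), (- p.2.1, - p.2.2)).
Definition qone : quat R := ((1, 0), (0, 0)).
Definition qmul (p q : quat R) : quat R :=
  let: ((a1, b1), (c1, d1)) := p in
  let: ((a2, b2), (c2, d2)) := q in
  ((a1 * a2 - b1 * b2 - c1 * c2 - d1 * d2,
    a1 * b2 + b1 * a2 + c1 * d2 - d1 * c2),
   (a1 * c2 - b1 * d2 + c1 * a2 + d1 * b2,
    a1 * d2 + b1 * c2 - c1 * b2 + d1 * a2)).
Definition qnorm (p : quat R) : R :=
  Num.sqrt (p.1.1 ^+ 2 + p.1.2 ^+ 2 + p.2.1 ^+ 2 + p.2.2 ^+ 2).

Definition Kset (k : Kind) : set (quat R) :=
  match k with
  | Kreal => [set q | q.1.2 = 0 /\ q.2.1 = 0 /\ q.2.2 = 0]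
  | Kcomplex => [set q | q.2.1 = 0 /\ q.2.2 = 0]
  | Kquat => setT
  end.

Definition Uset (k : Kind) : set (quat R) := [set u | Kset k u /\ qnorm u = 1].
End Quat.

Section Metric.
Variable R : realType.

Definition is_distance (T : Type) (rho : T -> T -> R) : Prop :=
  (forall x y, 0 <= rho x y) /\
  (forall x y, rho x y = 0 <-> x = y) /\
  (forall x y, rho x y = rho y x) /\
  (forall x y z, rho x z <= rho x y + rho y z).

Definition metric_open (T : Type) (rho : T -> T -> R) (A : set T) : Prop :=
  forall x, A x -> exists2 r : R, 0 < r & forall y, rho x y < r -> A y.

Definition is_Kvs (k : Kind) (E : zmodType) (sc : quat R -> E -> E) : Prop :=
  (forall l m x, Kset k l -> Kset k m -> sc (qadd l m) x = sc l x + sc m x) /\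
  (forall l x y, Kset k l -> sc l (x + y) = sc l x + sc l y) /\
  (forall l m x, Kset k l -> Kset k m -> sc (qmul l m) x = sc l (sc m x)) /\
  (forall x, sc (qone R) x = x).

(* metric vector space over K: a topological vector space over K whose
   topology is generated by the metric d (continuity of + : E x E -> E and of
   scalar multiplication K x E -> E, written out for the metric topology) *)
Definition metric_vector_space (k : Kind) (E : zmodType)
    (sc : quat R -> E -> E) (d : E -> E -> R) : Prop :=
  is_distance d /\ is_Kvs k sc /\
  (forall x y (e : R), 0 < e -> exists2 r : R, 0 < r &
     forall x' y', d x x' < r -> d y y' < r -> d (x + y) (x' + y') < e) /\
  (forall l x (e : R), Kset k l -> 0 < e -> exists2 r : R, 0 < r &
     forall l' x', Kset k l' -> qnorm (qadd l (qopp l')) < r -> d x x' < r ->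
       d (sc l x) (sc l' x') < e).

Definition translation_invariant (E : zmodType) (d : E -> E -> R) (C0 : R) :=
  forall x y z : E, d (x + z) (y + z) <= d x y + C0.

Definition lipschitz_multiplicative (k : Kind) (E : zmodType)
    (sc : quat R -> E -> E) (d : E -> E -> R) (C1 C2 C3 : R) :=
  1 <= C1 /\ 0 <= C2 /\ 0 <= C3 /\
  forall l x y, Kset k l ->
    C1^-1 * qnorm l * d x y - C2 * qnorm l - C3 <= d (sc l x) (sc l y) /\
    d (sc l x) (sc l y) <= C1 * qnorm l * d x y + C2 * qnorm l + C3.

Definition lipschitz_equivalent (T : Type) (rho sigma : T -> T -> R) (A B : R) :=
  forall x y, A^-1 * sigma x y - B <= rho x y /\ rho x y <= A * sigma x y + B.

Definition averaged_distance (k : Kind) (mu : {measure set (quat R) -> \bar R})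
    (E : zmodType) (sc : quat R -> E -> E) (d : E -> E -> R) (x y : E) : R :=
  fine (\int[mu]_(u in Uset k) (d (sc u x) (sc u y))%:E)%E.
End Metric.

(* The integrand [u |-> d (u x) (u y)] is continuous on [K] (continuity of the
   scalar multiplication), hence measurable, and it is bounded on [U] by the
   multiplicative bound, so [d0] is an honest average over a probability space.
   Each inequality satisfied by [d] (triangle, translation, lipschitz bounds)
   holds pointwise in [u] and integrates; for the multiplicative bounds write
   [u (l x) = (u l u^-1) (u x)] with [|u l u^-1| = |l|].
   Both distances have the same small balls.  If [d x y_n -> 0] then
   [d (u x) (u y_n) -> 0] for every [u], and dominated convergence gives
   [d0 x y_n -> 0].  If [d x y_n >= r] for all [n], continuity of [v |-> u^-1 v]
   at [u x] bounds [d (u x) (u y_n)] below by some [c_u > 0] independent of [n],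
   and this bounds the averages [d0 x y_n] below uniformly. *)

From mathcomp Require Import all_boot all_algebra all_classical all_reals all_analysis.
From mathcomp Require Import ring lra measurable_realfun.
Import GRing.Theory Num.Theory order.Order.TTheory.
Local Open Scope ring_scope.
Local Open Scope classical_set_scope.
Set Implicit Arguments. Unset Strict Implicit. Unset Printing Implicit Defensive.

Section Quaternion.
Variable R : realType.
Implicit Types p q r u l : quat R.

Definition qconj p : quat R := ((p.1.1, - p.1.2), (- p.2.1, - p.2.2)).
Definition qnorm2 p : R := p.1.1 ^+ 2 + p.1.2 ^+ 2 + p.2.1 ^+ 2 + p.2.2 ^+ 2.

Lemma qnormE p : qnorm p = Num.sqrt (qnorm2 p). Proof. by []. Qed.

Lemma qnorm2_ge0 p : 0 <= qnorm2 p.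
Proof. by rewrite /qnorm2 !addr_ge0 ?sqr_ge0. Qed.

Lemma qnorm_eq1 p : (qnorm p = 1) <-> (qnorm2 p = 1).
Proof.
rewrite qnormE; split => [h|->]; last exact: sqrtr1.
by rewrite -(sqr_sqrtr (qnorm2_ge0 p)) h expr1n.
Qed.

Lemma qmulA p q r : qmul (qmul p q) r = qmul p (qmul q r).
Proof.
case: p => [[a1 b1] [c1 d1]]; case: q => [[a2 b2] [c2 d2]].
by case: r => [[a3 b3] [c3 d3]] /=; congr (_, _); congr (_, _); ring.
Qed.

Lemma qmulq1 p : qmul p (qone R) = p.
Proof. by case: p => [[a b] [c e]] /=; congr (_, _); congr (_, _); ring. Qed.

Lemma qnorm2M p q : qnorm2 (qmul p q) = qnorm2 p * qnorm2 q.
Proof.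
by case: p => [[a1 b1] [c1 d1]]; case: q => [[a2 b2] [c2 d2]]; rewrite /qnorm2 /=; ring.
Qed.

Lemma qnormM p q : qnorm (qmul p q) = qnorm p * qnorm q.
Proof. by rewrite !qnormE qnorm2M sqrtrM // qnorm2_ge0. Qed.

Lemma qnorm_conj p : qnorm (qconj p) = qnorm p.
Proof. by rewrite !qnormE /qnorm2 /= !sqrrN. Qed.

Lemma qnorm_subrr p : qnorm (qadd p (qopp p)) = 0.
Proof. by rewrite qnormE /qnorm2 /= !subrr expr0n /= !addr0 sqrtr0. Qed.

Lemma qmul_conjl u : qnorm u = 1 -> qmul (qconj u) u = qone R.
Proof.
move=> /qnorm_eq1; case: u => [[a b] [c e]]; rewrite /qnorm2 /= => h.
by congr (_, _); congr (_, _); rewrite -?h; ring.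
Qed.

Lemma Kset_mul k p q : Kset k p -> Kset k q -> Kset k (qmul p q).
Proof.
case: k => //=; case: p => [[a1 b1] [c1 d1]]; case: q => [[a2 b2] [c2 d2]] /=.
- by move=> [-> [-> ->]] [-> [-> ->]]; split; [|split]; ring.
- by move=> [-> ->] [-> ->]; split; ring.
Qed.

Lemma Kset_conj k p : Kset k p -> Kset k (qconj p).
Proof.
case: k => //=; case: p => [[a b] [c e]] /=.
- by move=> [-> [-> ->]]; rewrite oppr0.
- by move=> [-> ->]; rewrite oppr0.
Qed.

Definition qconjg u l := qmul (qmul u l) (qconj u).

Lemma qconjgK u l : qnorm u = 1 -> qmul (qconjg u l) u = qmul u l.
Proof. by move=> u1; rewrite /qconjg qmulA qmul_conjl // qmulq1. Qed.

Lemma qnorm_conjg u l : qnorm u = 1 -> qnorm (qconjg u l) = qnorm l.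
Proof. by move=> u1; rewrite /qconjg !qnormM qnorm_conj u1 mul1r mulr1. Qed.

Lemma Kset_conjg k u l : Kset k u -> Kset k l -> Kset k (qconjg u l).
Proof. by move=> Ku Kl; apply: Kset_mul; [apply: Kset_mul|apply: Kset_conj]. Qed.

End Quaternion.

Lemma measurable_fun_countable_fibers d d' (T : measurableType d)
    (rT : measurableType d') (Z : countType) (h : T -> Z) (f : Z -> rT) (D : set T) :
  (forall z, measurable (h @^-1` [set z])) -> measurable_fun D (f \o h).
Proof.
move=> mh mD B mB; apply: measurableI => //.
rewrite (_ : _ @^-1` _ = \bigcup_z (if pselect (B (f z)) then h @^-1` [set z] else set0)).
  apply: countable_bigcupT_measurable; first exact: countableP.
  by move=> z; case: (pselect (B (f z))) => _ /=; [exact: mh|exact: measurable0].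
apply/seteqP; split=> [t Bt|t [z _]]; first by exists (h t) => //; case: (pselect (B (f (h t)))).
by case: (pselect (B (f z))) => // Bz /= hz; rewrite /= hz.
Qed.

Lemma measurable_preimageT d d' (aT : measurableType d) (rT : measurableType d')
    (f : aT -> rT) (B : set rT) :
  measurable_fun setT f -> measurable B -> measurable (f @^-1` B).
Proof. by move=> mf mB; rewrite -[_ @^-1` _]setTI; apply: mf. Qed.

Section QuatMeasurability.
Variable R : realType.
Implicit Types (p u : quat R) (n : nat).

Let m11 : measurable_fun setT (fun p : quat R => p.1.1).
Proof. exact: (measurableT_comp measurable_fst measurable_fst). Qed.
Let m12 : measurable_fun setT (fun p : quat R => p.1.2).
Proof. exact: (measurableT_comp measurable_snd measurable_fst). Qed.
Let m21 : measurable_fun setT (fun p : quat R => p.2.1).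
Proof. exact: (measurableT_comp measurable_fst measurable_snd). Qed.
Let m22 : measurable_fun setT (fun p : quat R => p.2.2).
Proof. exact: (measurableT_comp measurable_snd measurable_snd). Qed.

Lemma measurable_Kset k : measurable (Kset k : set (quat R)).
Proof.
have m0 : measurable [set 0 : R] by exact: measurable_set1.
case: k => /=; last exact: measurableT.
- rewrite (_ : [set q | _] = (fun p : quat R => p.1.2) @^-1` [set 0] `&`
    ((fun p : quat R => p.2.1) @^-1` [set 0] `&` (fun p : quat R => p.2.2) @^-1` [set 0])) //.
  by apply: measurableI; [|apply: measurableI]; exact: measurable_preimageT.
- rewrite (_ : [set q | _] = (fun p : quat R => p.2.1) @^-1` [set 0] `&`
    (fun p : quat R => p.2.2) @^-1` [set 0]) //.
  by apply: measurableI; exact: measurable_preimageT.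
Qed.

Lemma measurable_qnorm2 : measurable_fun setT (@qnorm2 R).
Proof.
by apply: measurable_funD; [apply: measurable_funD; [apply: measurable_funD|]|];
  apply: measurable_funX.
Qed.

Lemma measurable_Uset k : measurable (Uset k : set (quat R)).
Proof.
rewrite (_ : Uset k = Kset k `&` @qnorm2 R @^-1` [set 1]).
  apply: measurableI; first exact: measurable_Kset.
  by apply: measurable_preimageT; [exact: measurable_qnorm2|exact: measurable_set1].
by apply/seteqP; split => u /= [Ku /qnorm_eq1].
Qed.

(* Measurability for the product sigma-algebra of [R^4] is obtained from
   continuity on [K] by rounding down to the grid [(n.+1)^-1 Z^4]: the rounding
   map has countably many measurable fibres and tends to the identity. *)
Definition gridN n : R := n.+1%:R.

Definition grid_index n p : (int * int) * (int * int) :=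
  ((Num.floor (p.1.1 * gridN n), Num.floor (p.1.2 * gridN n)),
   (Num.floor (p.2.1 * gridN n), Num.floor (p.2.2 * gridN n))).

Definition grid_point n (z : (int * int) * (int * int)) : quat R :=
  ((z.1.1%:~R / gridN n, z.1.2%:~R / gridN n),
   (z.2.1%:~R / gridN n, z.2.2%:~R / gridN n)).

Definition qgrid n p := grid_point n (grid_index n p).

Lemma gridN_gt0 n : 0 < gridN n. Proof. by rewrite ltr0n. Qed.

Lemma measurable_floor_fiber n (a : int) :
  measurable [set t : R | Num.floor (t * gridN n) = a].
Proof.
rewrite (_ : [set t | _] = (fun t => t * gridN n) @^-1` `[a%:~R, (a + 1)%:~R[).
  rewrite -[_ @^-1` _]setTI.
  by apply: mulrr_measurable; [exact: measurableT|exact: measurable_itv].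
by apply/seteqP; split => t /=; rewrite in_itv /= -floor_eq => /eqP.
Qed.

Lemma measurable_grid_fiber n z : measurable (grid_index n @^-1` [set z]).
Proof.
case: z => [[a b] [c e]].
rewrite (_ : _ @^-1` _ =
  ((fun p : quat R => p.1.1) @^-1` [set t | Num.floor (t * gridN n) = a] `&`
   (fun p : quat R => p.1.2) @^-1` [set t | Num.floor (t * gridN n) = b]) `&`
  ((fun p : quat R => p.2.1) @^-1` [set t | Num.floor (t * gridN n) = c] `&`
   (fun p : quat R => p.2.2) @^-1` [set t | Num.floor (t * gridN n) = e])).
  by apply: measurableI; apply: measurableI;
    apply: measurable_preimageT => //; exact: measurable_floor_fiber.
apply/seteqP; split => p /=; first by case=> -> -> -> ->.
by rewrite /grid_index => -[[-> ->] [-> ->]].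
Qed.

Lemma floor_grid_bounds n (t : R) :
  (Num.floor (t * gridN n))%:~R / gridN n <= t <
  (Num.floor (t * gridN n))%:~R / gridN n + (gridN n)^-1.
Proof.
have /andP[lo hi] := floor_itv (t * gridN n); have N0 := gridN_gt0 n.
rewrite ler_pdivrMr // lo /= -[X in _ + X]div1r -mulrDl ltr_pdivlMr //.
by move: hi; rewrite intrD.
Qed.

Lemma Kset_qgrid k n u : Kset k u -> Kset k (qgrid n u).
Proof.
case: k => //=; case: u => [[a b] [c e]] /=.
- by move=> [-> [-> ->]]; rewrite !mul0r floor0 !mul0r.
- by move=> [-> ->]; rewrite !mul0r floor0 !mul0r.
Qed.

Lemma qgrid_cvg u (r : R) : 0 < r ->
  \forall n \near \oo, qnorm (qadd u (qopp (qgrid n u))) < r.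
Proof.
move=> r0; near=> n.
set s := (gridN n)^-1.
have s0 : 0 < s by rewrite invr_gt0 gridN_gt0.
have sr : 2 * s < r.
  rewrite /s ltr_pdivrMr ?gridN_gt0 // mulrC -ltr_pdivrMr //.
  apply: lt_le_trans (truncnS_gt (2 / r)) _; rewrite ler_nat.
  by near: n; exact: nbhs_infty_ge.
case: u => [[a b] [c e]]; rewrite qnormE /qnorm2 /qadd /qopp /qgrid /grid_point /grid_index /=.
have := floor_grid_bounds n a; have := floor_grid_bounds n b.
have := floor_grid_bounds n c; have := floor_grid_bounds n e; rewrite -/s.
have sq (x y : R) : x <= y < x + s -> (y - x) ^+ 2 < s ^+ 2.
  by move=> /andP[h1 h2]; rewrite -subr_gt0 subr_sqr; apply: mulr_gt0; lra.
move=> /sq ? /sq ? /sq ? /sq ?.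
rewrite -[r]gtr0_norm // -sqrtr_sqr ltr_sqrt ?exprn_gt0 //.
have : (2 * s) ^+ 2 < r ^+ 2 by rewrite -subr_gt0 subr_sqr; apply: mulr_gt0; lra.
rewrite exprMn; lra.
Unshelve. all: by end_near.
Qed.

Definition Kcontinuous k (f : quat R -> R) :=
  forall u, Kset k u -> forall e, 0 < e -> exists2 r, 0 < r &
    forall u', Kset k u' -> qnorm (qadd u (qopp u')) < r -> `|f u - f u'| < e.

Lemma measurable_fun_Kcontinuous k (f : quat R -> R) :
  Kcontinuous k f -> measurable_fun (Kset k) f.
Proof.
move=> fcont; apply: (measurable_fun_cvg (h := fun n => f \o qgrid n)).
  move=> n; exact: (measurable_fun_countable_fibers (f \o grid_point n)
    (@measurable_grid_fiber n)).
move=> u Ku; apply/cvgrPdist_lt => e e0.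
have [r r0 hr] := fcont u Ku e e0.
near=> n; apply: hr; first exact: Kset_qgrid.
by near: n; exact: qgrid_cvg.
Unshelve. all: by end_near.
Qed.

End QuatMeasurability.

Section ProbabilitySetIntegral.
Context d (T : measurableType d) (R : realType) (mu : {measure set T -> \bar R}).
Variables (U : set T) (mU : measurable U).
Implicit Types (f g : T -> R) (A : set T).

Lemma measure_cover_neq0 (A : (set T)^nat) :
  (forall m, measurable (A m)) -> U `<=` \bigcup_m A m -> mu U != 0%E ->
  exists m, mu (A m) != 0%E.
Proof.
move=> mA cover; apply: contraNP => /forallNP A0.
have {}A0 m : mu (A m) = 0%E by move/negP: (A0 m); rewrite negbK => /eqP.
have : (mu U <= \sum_(m <oo) mu (A m))%E by exact: measure_sigma_subadditive.
by rewrite eseries0 ?eq_le ?measure_ge0 ?andbT // => m _ _; exact: A0.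
Qed.

Lemma integral_ge_on_subset A f (c : R) : measurable A -> A `<=` U -> 0 <= c ->
  measurable_fun U f -> (forall u, U u -> 0 <= f u) -> (forall u, A u -> c <= f u) ->
  (c%:E * mu A <= \int[mu]_(u in U) (f u)%:E)%E.
Proof.
move=> mA AU c0 mf f0 fc.
have mfE : measurable_fun U (EFin \o f) by exact/measurable_EFinP.
rewrite -integral_cst //.
have fA : (\int[mu]_(u in A) c%:E <= \int[mu]_(u in A) (f u)%:E)%E.
  by apply: ge0_le_integral => //; exact: measurable_funS mfE.
apply: le_trans fA _.
by apply: ge0_subset_integral => // u Uu; rewrite lee_fin f0.
Qed.

Definition bounded_measurable_on f :=
  measurable_fun U f /\ exists M, forall u, U u -> `|f u| <= M.

Lemma bounded_measurable_cst c : bounded_measurable_on (fun=> c).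
Proof. by split; [exact: measurable_cst|exists `|c|]. Qed.

Lemma bounded_measurable_D f g : bounded_measurable_on f -> bounded_measurable_on g ->
  bounded_measurable_on (f \+ g).
Proof.
move=> [mf [M fM]] [mg [N gN]]; split; first exact: measurable_funD.
exists (M + N) => u Uu; rewrite (le_trans (ler_normD _ _)) // lerD ?fM ?gN //.
Qed.

Lemma bounded_measurable_Z f a : bounded_measurable_on f ->
  bounded_measurable_on (fun u => a * f u).
Proof.
move=> [mf [M fM]]; split; first by apply: measurable_funM => //; exact: measurable_cst.
by exists (`|a| * M) => u Uu; rewrite normrM ler_wpM2l ?fM.
Qed.

Lemma bounded_measurable_affine f a b : bounded_measurable_on f ->
  bounded_measurable_on (fun u => a * f u + b).
Proof.
by move=> bf; apply: bounded_measurable_D (bounded_measurable_cst b); exact: bounded_measurable_Z.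
Qed.

Hypothesis muU1 : mu U = 1%E.

Lemma bounded_measurable_integrable f :
  bounded_measurable_on f -> mu.-integrable U (EFin \o f).
Proof.
move=> [mf [M fM]]; apply: measurable_bounded_integrable => //; first by rewrite muU1 ltry.
exists M; split; first exact: num_real.
by move=> M' MM' u Uu /=; rewrite (le_trans (fM u Uu)) // ltW.
Qed.

Lemma Rintegral_cst1 c : \int[mu]_(u in U) c = c.
Proof. by rewrite Rintegral_cst // muU1 mulr1. Qed.

Lemma le_Rintegral_bounded f g : bounded_measurable_on f -> bounded_measurable_on g ->
  (forall u, U u -> f u <= g u) -> \int[mu]_(u in U) f u <= \int[mu]_(u in U) g u.
Proof. by move=> bf bg; apply: le_Rintegral => //; exact: bounded_measurable_integrable. Qed.

Lemma RintegralD_bounded f g : bounded_measurable_on f -> bounded_measurable_on g ->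
  \int[mu]_(u in U) (f u + g u) = \int[mu]_(u in U) f u + \int[mu]_(u in U) g u.
Proof. by move=> bf bg; apply: RintegralD => //; exact: bounded_measurable_integrable. Qed.

Lemma Rintegral_affine f a b : bounded_measurable_on f ->
  \int[mu]_(u in U) (a * f u + b) = a * \int[mu]_(u in U) f u + b.
Proof.
move=> bf; rewrite RintegralD_bounded ?Rintegral_cst1 ?RintegralZl //.
- exact: bounded_measurable_integrable.
- exact: bounded_measurable_Z.
- exact: bounded_measurable_cst.
Qed.

Lemma Rintegral_affine_le f g a b : bounded_measurable_on f -> bounded_measurable_on g ->
  (forall u, U u -> a * f u + b <= g u) ->
  a * \int[mu]_(u in U) f u + b <= \int[mu]_(u in U) g u.
Proof.
move=> bf bg fg; rewrite -Rintegral_affine //.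
exact: le_Rintegral_bounded (bounded_measurable_affine _ _ bf) bg fg.
Qed.

Lemma Rintegral_le_affine f g a b : bounded_measurable_on f -> bounded_measurable_on g ->
  (forall u, U u -> g u <= a * f u + b) ->
  \int[mu]_(u in U) g u <= a * \int[mu]_(u in U) f u + b.
Proof.
move=> bf bg gf; rewrite -Rintegral_affine //.
exact: le_Rintegral_bounded bg (bounded_measurable_affine _ _ bf) gf.
Qed.

Lemma Rintegral_uniformly_pos (f : nat -> T -> R) :
  (forall n, bounded_measurable_on (f n)) -> (forall n u, U u -> 0 <= f n u) ->
  (forall u, U u -> exists2 c, 0 < c & forall n, c <= f n u) ->
  exists2 c, 0 < c & forall n, c <= \int[mu]_(u in U) f n u.
Proof.
move=> bf f0 fpos.
pose A m := \bigcap_n (U `&` f n @^-1` `[m.+1%:R^-1, +oo[).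
have mA m : measurable (A m).
  by apply: bigcapT_measurable => n; apply: (bf n).1 => //; exact: measurable_itv.
have AU m : A m `<=` U by move=> u /(_ 0%N I) [].
have cover : U `<=` \bigcup_m A m.
  move=> u Uu; have [c c0 cf] := fpos u Uu.
  exists (Num.trunc c^-1) => // n _; split => //=.
  rewrite in_itv /= andbT (le_trans _ (cf n)) // -[X in _ <= X]invrK lef_pV2 ?posrE ?invr_gt0 //.
  exact/ltW/truncnS_gt.
have [m Am0] : exists m, mu (A m) != 0%E by apply: measure_cover_neq0 mA cover _; rewrite muU1.
have /fin_numPlt/andP[_ Aoo] : mu (A m) \is a fin_num.
  by rewrite ge0_fin_numE ?measure_ge0 // (le_lt_trans _ (ltry 1)) // -muU1 le_measure ?inE.
exists (m.+1%:R^-1 * fine (mu (A m))).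
  by rewrite mulr_gt0 ?invr_gt0 ?ltr0n // fine_gt0 // lt0e Am0 measure_ge0.
move=> n; have fin := integrable_fin_num mU (bounded_measurable_integrable (bf n)).
rewrite -lee_fin /Rintegral fineK // EFinM fineK ?ge0_fin_numE ?measure_ge0 //.
apply: integral_ge_on_subset => //; [exact: (bf n).1|exact: f0|].
by move=> u /(_ n I) [_]; rewrite /= in_itv /= andbT.
Qed.

Lemma cvg_Rintegral0_bounded (f : nat -> T -> R) (B : R) :
  (forall n, measurable_fun U (f n)) -> (forall n u, U u -> 0 <= f n u <= B) ->
  (forall u, U u -> f ^~ u @ \oo --> 0) ->
  (fun n => \int[mu]_(u in U) f n u) @ \oo --> 0.
Proof.
move=> mf fB fcvg.
have mfE n : measurable_fun U (EFin \o f n) by exact/measurable_EFinP.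
have cvgE : {ae mu, forall u, U u -> (EFin \o f n) u @[n --> \oo] --> (0 : \bar R)}.
  by apply: aeW => u Uu; apply: cvg_EFin; [exact: nearW|exact: fcvg].
have domB : {ae mu, forall u n, U u -> (`|(EFin \o f n) u| <= (EFin \o cst B) u)%E}.
  by apply: aeW => u n Uu; have /andP[f0 fB'] := fB n u Uu; rewrite /= lee_fin ger0_norm.
have [_ _] := dominated_convergence mU mfE (measurable_cst _) cvgE
  (bounded_measurable_integrable (bounded_measurable_cst B)) domB.
by rewrite integral0 => /fine_cvgP [].
Qed.

End ProbabilitySetIntegral.

Lemma small_of_seq_small (T : Type) (R : realType) (rho sigma : T -> R) (r : R) :
  (forall y : nat -> T, (forall n, sigma (y n) < n.+1%:R^-1) -> exists n, rho (y n) < r) ->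
  exists2 s, 0 < s & forall z, sigma z < s -> rho z < r.
Proof.
move=> seq_small; apply: contrapT => /forall2NP no_s.
have bad n : exists z, sigma z < n.+1%:R^-1 /\ r <= rho z.
  have [/negP|/existsNP[z /not_implyP[sz /negP]]] := no_s n.+1%:R^-1.
    by rewrite invr_gt0 ltr0n.
  by rewrite -leNgt; exists z.
have [y hy] := choice bad.
have [n] := seq_small y (fun n => (hy n).1).
by rewrite ltNge (hy n).2.
Qed.

Lemma metric_open_le (T : Type) (R : realType) (rho sigma : T -> T -> R) (A : set T) :
  (forall x r, 0 < r -> exists2 s, 0 < s & forall y, sigma x y < s -> rho x y < r) ->
  metric_open rho A -> metric_open sigma A.
Proof.
move=> small Aopen x Ax; have [r r0 rA] := Aopen x Ax; have [s s0 sr] := small x r r0.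
by exists s => // y /sr /rA.
Qed.

Section AveragedDistance.
Variables (R : realType) (k : Kind) (E : zmodType) (sc : quat R -> E -> E).
Variables (d : E -> E -> R) (C1 C2 C3 : R) (mu : {measure set (quat R) -> \bar R}).
Hypothesis dmvs : metric_vector_space k sc d.
Hypothesis dmult : lipschitz_multiplicative k sc d C1 C2 C3.
Hypothesis muU1 : mu (Uset k) = 1%E.
Implicit Types (x y z : E) (u l : quat R).

Local Notation U := (Uset k).
Let mU : measurable U := @measurable_Uset R k.
Let d0 := averaged_distance k mu sc d.
Let dU x y u := d (sc u x) (sc u y).

Let d_ge0 x y : 0 <= d x y. Proof. by case: dmvs => -[]. Qed.
Let d_eq0 x y : d x y = 0 <-> x = y. Proof. by case: dmvs => -[_ []]. Qed.
Let d_xx x : d x x = 0. Proof. exact/d_eq0. Qed.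
Let d_sym x y : d x y = d y x. Proof. by case: dmvs => -[_ [_ []]]. Qed.
Let d_triangle x y z : d x z <= d x y + d y z. Proof. by case: dmvs => -[_ [_ [_]]]. Qed.
Let scA l m x : Kset k l -> Kset k m -> sc (qmul l m) x = sc l (sc m x).
Proof. by case: dmvs => _ [[_ [_ [h _]]] _]; apply: h. Qed.
Let sc1 x : sc (qone R) x = x. Proof. by case: dmvs => _ [[_ [_ [_]]]]. Qed.
Let scD l x y : Kset k l -> sc l (x + y) = sc l x + sc l y.
Proof. by case: dmvs => _ [[_ [h _]] _]; apply: h. Qed.
Let sc_cont l x e : Kset k l -> 0 < e -> exists2 r : R, 0 < r &
  forall l' x', Kset k l' -> qnorm (qadd l (qopp l')) < r -> d x x' < r ->
    d (sc l x) (sc l' x') < e.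
Proof. by case: dmvs => _ [_ [_]]; apply. Qed.
Let d_mult l x y : Kset k l ->
  C1^-1 * qnorm l * d x y - C2 * qnorm l - C3 <= d (sc l x) (sc l y) /\
  d (sc l x) (sc l y) <= C1 * qnorm l * d x y + C2 * qnorm l + C3.
Proof. by case: dmult => _ [_ [_]]; apply. Qed.

Let UK u : U u -> Kset k u. Proof. by case. Qed.
Let Unorm u : U u -> qnorm u = 1. Proof. by case. Qed.

Lemma sc_conjK u x : U u -> sc (qconj u) (sc u x) = x.
Proof.
move=> Uu; rewrite -scA ?qmul_conjl ?sc1 //; by [apply: Unorm|apply/Kset_conj/UK|apply: UK].
Qed.

Lemma d_sub_le a b a' b' : `|d a b - d a' b'| <= d a a' + d b b'.
Proof.
have := d_triangle a a' b; have := d_triangle a' b' b; have := d_triangle a' a b'.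
have := d_triangle a b b'; rewrite (d_sym a' a) (d_sym b' b) ler_norml; lra.
Qed.

Lemma dU_Kcontinuous x y : Kcontinuous k (dU x y).
Proof.
move=> u Ku e e0; have e2 : 0 < e / 2 by rewrite divr_gt0.
have [r1 r10 h1] := sc_cont x Ku e2; have [r2 r20 h2] := sc_cont y Ku e2.
exists (Num.min r1 r2); first by rewrite lt_min r10 r20.
move=> u' Ku'; rewrite lt_min => /andP[ur1 ur2].
have := h1 u' x Ku' ur1; have := h2 u' y Ku' ur2; rewrite !d_xx => /(_ r20) ? /(_ r10) ?.
by apply: le_lt_trans (d_sub_le _ _ _ _) _; lra.
Qed.

Lemma dU_le x y u : U u -> dU x y u <= C1 * d x y + C2 + C3.
Proof. by move=> Uu; have [_] := d_mult x y (UK Uu); rewrite Unorm // !mulr1. Qed.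

Lemma dU_bounded_measurable x y : bounded_measurable_on U (dU x y).
Proof.
split.
  apply: (measurable_funS (@measurable_Kset R k) UK).
  exact: measurable_fun_Kcontinuous (dU_Kcontinuous x y).
by exists (C1 * d x y + C2 + C3) => u Uu; rewrite ger0_norm ?dU_le //; exact: d_ge0.
Qed.

Let dUb := dU_bounded_measurable.

Lemma d0E x y : d0 x y = \int[mu]_(u in U) dU x y u. Proof. by []. Qed.

Lemma d0_ge0 x y : 0 <= d0 x y.
Proof. by apply: Rintegral_ge0 => u _; exact: d_ge0. Qed.

Lemma d0_sym x y : d0 x y = d0 y x.
Proof. by apply: eq_Rintegral => u _; rewrite /dU d_sym. Qed.

Lemma d0_xx x : d0 x x = 0.
Proof. by rewrite d0E -[RHS](Rintegral_cst1 mU muU1); apply: eq_Rintegral => u _; exact: d_xx. Qed.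

Lemma d0_triangle x y z : d0 x z <= d0 x y + d0 y z.
Proof.
rewrite !d0E -RintegralD_bounded //.
by apply: le_Rintegral_bounded => //; [exact: bounded_measurable_D|move=> u _; exact: d_triangle].
Qed.

Lemma d0_lipschitz_equivalent : lipschitz_equivalent d0 d C1 (C2 + C3).
Proof.
move=> x y; have dUxy u : U u ->
    C1^-1 * d x y - (C2 + C3) <= dU x y u <= C1 * d x y + (C2 + C3).
  by move=> Uu; have [] := d_mult x y (UK Uu); rewrite Unorm // !mulr1 /dU => ? ?; lra.
split.
- rewrite -[X in X <= _](Rintegral_cst1 mU muU1).
  apply: (le_Rintegral_bounded mU muU1 (bounded_measurable_cst U _) (dUb x y)).
  by move=> u /dUxy /andP[].
- rewrite -[X in _ <= X](Rintegral_cst1 mU muU1).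
  apply: (le_Rintegral_bounded mU muU1 (dUb x y) (bounded_measurable_cst U _)).
  by move=> u /dUxy /andP[].
Qed.

Lemma d0_translation_invariant C0 :
  translation_invariant d C0 -> translation_invariant d0 C0.
Proof.
move=> dti x y z; rewrite -[d0 x y]mul1r !d0E.
apply: (Rintegral_le_affine mU muU1 (dUb x y) (dUb _ _)) => u /UK Ku.
by rewrite mul1r /dU !scD //; exact: dti.
Qed.

Lemma dU_scale l x y u : Kset k l -> U u ->
  dU (sc l x) (sc l y) u = d (sc (qconjg u l) (sc u x)) (sc (qconjg u l) (sc u y)).
Proof.
move=> Kl Uu; have Ku := UK Uu; have Kq := Kset_conjg Ku Kl.
by rewrite /dU -!scA // qconjgK // Unorm.
Qed.

Lemma d0_lipschitz_multiplicative : lipschitz_multiplicative k sc d0 C1 C2 C3.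
Proof.
have [C11 [C20 [C30 _]]] := dmult; split=> //; split=> //; split=> // l x y Kl.
have dUl u : U u ->
    C1^-1 * qnorm l * dU x y u - C2 * qnorm l - C3 <= dU (sc l x) (sc l y) u /\
    dU (sc l x) (sc l y) u <= C1 * qnorm l * dU x y u + C2 * qnorm l + C3.
  move=> Uu; rewrite dU_scale // -(qnorm_conjg l (Unorm Uu)).
  exact/d_mult/Kset_conjg/Kl/UK.
rewrite -!addrA; split.
- apply: (Rintegral_affine_le mU muU1 (dUb x y) (dUb _ _)).
  by move=> u /dUl []; rewrite -!addrA.
- apply: (Rintegral_le_affine mU muU1 (dUb x y) (dUb _ _)).
  by move=> u /dUl []; rewrite -!addrA.
Qed.

Lemma small_d0_small_d x r : 0 < r ->
  exists2 s, 0 < s & forall y, d0 x y < s -> d x y < r.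
Proof.
move=> r0; apply: small_of_seq_small => y d0y; apply: contrapT => /forallNP far.
have {}far n : r <= d x (y n) by rewrite leNgt; apply/negP/far.
have pos u : U u -> exists2 c, 0 < c & forall n, c <= dU x (y n) u.
  move=> Uu; have [c c0 cont] := sc_cont (sc u x) (Kset_conj (UK Uu)) r0.
  exists c => // n; rewrite leNgt; apply/negP => ltc.
  have := cont (qconj u) (sc u (y n)) (Kset_conj (UK Uu)).
  rewrite qnorm_subrr !sc_conjK // => /(_ c0 ltc).
  by rewrite ltNge far.
have [c c0 cd0] := Rintegral_uniformly_pos mU muU1 (fun n => dUb x (y n))
  (fun n u _ => d_ge0 _ _) pos.
have [n _ hn] := near_infty_natSinv_lt (PosNum c0).
have := lt_trans (le_lt_trans (cd0 n) (d0y n)) (hn n (leqnn n)).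
by rewrite ltxx.
Qed.

Lemma small_d_small_d0 x r : 0 < r ->
  exists2 s, 0 < s & forall y, d x y < s -> d0 x y < r.
Proof.
move=> r0; apply: small_of_seq_small => y dy.
have C10 : 0 <= C1 by case: dmult => C11 _; exact: le_trans C11.
have bnd n u : U u -> 0 <= dU x (y n) u <= C1 + C2 + C3.
  move=> Uu; rewrite d_ge0 (le_trans (dU_le _ _ Uu)) // !lerD2r ler_piMr ?d_ge0 //.
  by rewrite (le_trans (ltW (dy n))) // invf_le1 ?ler1n ?ltr0n.
have cvg0 u : U u -> (fun n => dU x (y n) u) @ \oo --> 0.
  move=> Uu; apply/cvgrPdist_lt => e e0.
  have [c c0 cont] := sc_cont x (UK Uu) e0.
  near=> n; rewrite sub0r normrN ger0_norm ?d_ge0 //.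
  apply: cont (UK Uu) _ _ => //; first by rewrite qnorm_subrr.
  apply: lt_trans (dy n) _; near: n; exact: near_infty_natSinv_lt (PosNum c0).
have /cvgrPdist_lt/(_ r r0) [N _ hN] :=
  cvg_Rintegral0_bounded mU muU1 (fun n => (dUb x (y n)).1) bnd cvg0.
by exists N; move: (hN N (leqnn N)); rewrite sub0r normrN ger0_norm ?d0_ge0.
Unshelve. all: by end_near.
Qed.

Lemma d0_is_distance : is_distance d0.
Proof.
split; first exact: d0_ge0.
split; last by split; [exact: d0_sym|exact: d0_triangle].
move=> x y; split=> [d0xy|->]; last exact: d0_xx.
apply/d_eq0/eqP; rewrite eq_le d_ge0 andbT leNgt; apply/negP => dxy.
have [s s0 /(_ y)] := small_d0_small_d x dxy.
by rewrite d0xy => /(_ s0); rewrite ltxx.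
Qed.

End AveragedDistance.

Theorem lemma2 (R : realType) (k : Kind) (E : zmodType)
    (sc : quat R -> E -> E) (d : E -> E -> R) (C0 C1 C2 C3 : R)
    (mu : {measure set (quat R) -> \bar R}) :
  metric_vector_space k sc d ->
  translation_invariant d C0 ->
  lipschitz_multiplicative k sc d C1 C2 C3 ->
  (* mu is the right-invariant Haar probability measure on U *)
  mu (Uset k) = 1%E ->
  (forall v, Uset k v -> forall A, measurable A -> A `<=` Uset k ->
     mu [set u | A (qmul u v)] = mu A) ->
  let d0 := averaged_distance k mu sc d in
  is_distance d0 /\
  lipschitz_equivalent d0 d C1 (C2 + C3) /\
  translation_invariant d0 C0 /\
  lipschitz_multiplicative k sc d0 C1 C2 C3 /\
  (forall A : set E, metric_open d A <-> metric_open d0 A).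
Proof.
move=> dmvs dti dmult muU1 _ d0.
split; first exact: (d0_is_distance dmvs dmult muU1).
split; first exact: (d0_lipschitz_equivalent dmvs dmult muU1).
split; first exact: (d0_translation_invariant dmvs dmult muU1 dti).
split; first exact: (d0_lipschitz_multiplicative dmvs dmult muU1).
by move=> A; split; apply: metric_open_le => x r r0;
  [exact: (small_d0_small_d dmvs dmult muU1)|exact: (small_d_small_d0 dmvs dmult muU1)].
Qed.
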